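(* Let $b>0$, let $q=2b$ be the reducer capacity, and let $X$ and $Y$ be disjoint lists of inputs, each input of size at most $b$; let $sum_x$ and $sum_y$ be the sums of the sizes of the inputs of $X$ and $Y$, respectively, with $sum_x>q$ and $sum_y>q$. Consider the following algorithm: pack the inputs of $X$ into bins of capacity $b$ and the inputs of $Y$ into bins of capacity $b$, using First-Fit Decreasing (or Best-Fit Decreasing); then, for each pair consisting of an $X$-bin and a $Y$-bin, create one reducer receiving all inputs of both bins. The resulting X2Y mapping schema uses at most $\frac{4\cdot sum_x\cdot sum_y}{b^2}$ reducers and has communication cost at most $\frac{4\cdot sum_x\cdot sum_y}{b}$.
   Context: An X2Y mapping schema for lists $X$ and $Y$ with capacity $q$ is an assignment of the inputs of $X\cup Y$ to a collection of reducers (each input may go to several reducers) such that every reducer receives inputs of total size at most $q$ and for every $x\in X$ and $y\in Y$ there is a reducer receiving both. The communication cost is the sum over reducers of the total size of the inputs assigned to it. *)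

From mathcomp Require Import all_boot all_order all_algebra.
Set Implicit Arguments. Unset Strict Implicit. Unset Printing Implicit Defensive.
Import Order.TTheory GRing.Theory Num.Theory.
Local Open Scope ring_scope.

Section X2Y.
Variables (R : realFieldType) (I : eqType) (w : I -> R).

Definition load (s : seq I) : R := \sum_(i <- s) w i.

Definition is_X2Y_schema (q : R) (X Y : seq I) (reducers : seq (seq I)) : Prop :=
  (forall r, r \in reducers -> {subset r <= X ++ Y}) /\
  (forall r, r \in reducers -> load r <= q) /\
  (forall x y, x \in X -> y \in Y -> exists2 r, r \in reducers & (x \in r) && (y \in r)).

Definition num_reducers (reducers : seq (seq I)) : nat := size reducers.

Definition comm_cost (reducers : seq (seq I)) : R := \sum_(r <- reducers) load r.

Variable b : R.

Fixpoint ff_insert (x : I) (bins : seq (seq I)) : seq (seq I) :=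
  match bins with
  | [::] => [:: [:: x]]
  | B :: bs => if load B + w x <= b then rcons B x :: bs else B :: ff_insert x bs
  end.

(* Best-Fit insertion: put x in a fullest bin where it fits (the first such one
   in case of ties), else open a new bin. *)
Definition bf_insert (x : I) (bins : seq (seq I)) : seq (seq I) :=
  let fits := [seq i <- iota 0 (size bins) | load (nth [::] bins i) + w x <= b] in
  match fits with
  | [::] => rcons bins [:: x]
  | j0 :: js =>
      let j := foldl (fun j i => if load (nth [::] bins j) < load (nth [::] bins i)
                                 then i else j) j0 js in
      set_nth [::] bins j (rcons (nth [::] bins j) x)
  end.

Definition decreasing_order (s : seq I) : seq I := sort (fun x y => w y <= w x) s.

Definition pack_decreasing (best : bool) (s : seq I) : seq (seq I) :=
  foldl (fun bins x => if best then bf_insert x bins else ff_insert x bins)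
        [::] (decreasing_order s).

Definition bin_pair_schema (bestX bestY : bool) (X Y : seq I) : seq (seq I) :=
  [seq BX ++ BY | BX <- pack_decreasing bestX X, BY <- pack_decreasing bestY Y].

End X2Y.

(* Both First-Fit and Best-Fit put an item into a new bin only when it fits in
   no existing bin, so any two bins of the final packing together hold more than
   b.
   Summing this over all pairs among n bins of total size S gives
   n (n - 1) b / 2 <= (n - 1) S, i.e. n b <= 2 S when n >= 2, and the case
   n <= 1 follows from S > 2 b.  Hence there are at most 2 sum_x / b X-bins and
   2 sum_y / b Y-bins, which bounds the number of bin pairs; each pair of bins
   holds at most 2 b = q, and the communication cost is
   n_Y sum_x + n_X sum_y <= 4 sum_x sum_y / b. *)

From mathcomp Require Import all_boot all_order all_algebra.
From mathcomp Require Import lra.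
Set Implicit Arguments. Unset Strict Implicit. Unset Printing Implicit Defensive.
Import Order.TTheory GRing.Theory Num.Theory.
Local Open Scope ring_scope.

Lemma foldl_select_mem (T : eqType) (f : T -> T -> T) :
  (forall a c, f a c = a \/ f a c = c) ->
  forall s a, foldl f a s \in a :: s.
Proof.
move=> f_select; elim=> [|c s IH] a /=; first exact: mem_head.
have := IH (f a c); rewrite inE => /orP [/eqP ->|in_s]; last by rewrite !inE in_s !orbT.
by case: (f_select a c) => ->; rewrite !inE eqxx ?orbT.
Qed.

Section Packing.
Variables (R : realFieldType) (I : eqType) (w : I -> R) (b : R).

Lemma load_cat s t : load w (s ++ t) = load w s + load w t.
Proof. exact: big_cat. Qed.

Lemma load_rcons B x : load w (rcons B x) = load w B + w x.
Proof. by rewrite -cats1 load_cat /load big_seq1. Qed.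

Lemma load_flatten bins : load w (flatten bins) = \sum_(B <- bins) load w B.
Proof. by rewrite /load big_flatten. Qed.

Inductive insertion_spec (x : I) : seq (seq I) -> seq (seq I) -> Prop :=
  | InsertNew bins of all (fun C => b < load w C + w x) bins :
      insertion_spec x bins (rcons bins [:: x])
  | InsertInto s1 B s2 of load w B + w x <= b :
      insertion_spec x (s1 ++ B :: s2) (s1 ++ rcons B x :: s2).

Lemma ff_insert_spec x bins : insertion_spec x bins (ff_insert w b x bins).
Proof.
elim: bins => [|C cs IH] /=; first exact: (@InsertNew x [::]).
case: ifP => [fitC | /negbT nfitC]; first exact: (@InsertInto x [::]).
case: IH => [bins fits_none | s1 B s2 fitB].
  by apply: (@InsertNew x (C :: bins)); rewrite /= fits_none ltNge nfitC.
exact: (@InsertInto x (C :: s1)).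
Qed.

Lemma bf_insert_spec x bins : insertion_spec x bins (bf_insert w b x bins).
Proof.
rewrite /bf_insert; set fits := fun i => _ <= b.
case E: [seq i <- iota 0 (size bins) | fits i] => [|j0 js].
  apply: InsertNew; apply/allP => C inC; rewrite ltNge; apply/negP => fitC.
  suff : has fits (iota 0 (size bins)) by rewrite has_filter E.
  apply/hasP; exists (index C bins); first by rewrite mem_iota add0n index_mem.
  by rewrite /fits nth_index.
set j := foldl _ j0 js.
have : j \in [seq i <- iota 0 (size bins) | fits i].
  by rewrite E; apply: foldl_select_mem => a c; case: ifP; [right|left].
rewrite mem_filter mem_iota add0n /= => /andP [fit_j j_lt].
rewrite -[in X in insertion_spec _ X](cat_take_drop j bins) (drop_nth [::] j_lt).
by rewrite set_nthE j_lt; apply: InsertInto.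
Qed.

Definition overfull (B C : seq I) : bool := b < load w B + load w C.

Definition valid_packing (bins : seq (seq I)) (s : seq I) : Prop :=
  [/\ perm_eq (flatten bins) s, all (fun B => load w B <= b) bins
    & pairwise overfull bins].

Lemma insertion_valid x bins bins' s :
  insertion_spec x bins bins' -> 0 <= w x <= b ->
  valid_packing bins s -> valid_packing bins' (rcons s x).
Proof.
move=> [{}bins fits_none | s1 B s2 fitB] /andP [wx0 wxb] [perm_s fit_all overfull_all].
  split.
  - by rewrite flatten_rcons -!cats1 perm_cat2r.
  - by rewrite all_rcons /= /load big_seq1 wxb.
  - rewrite -cats1 pairwise_cat allrel1r overfull_all /= andbT.
    by apply: sub_all fits_none => C; rewrite /overfull /load big_seq1.
have grow C : b < C + load w B -> b < C + load w (rcons B x).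
  by rewrite load_rcons => ?; lra.
split.
- rewrite -(perm_cat2r [:: x]) in perm_s.
  rewrite -[rcons s x]cats1 -(permPr perm_s).
  by rewrite !flatten_cat /= -cats1 -!catA !perm_cat2l perm_catC.
- by move: fit_all; rewrite !all_cat /= load_rcons fitB => /and3P [-> _ ->].
- move: overfull_all; rewrite !pairwise_cat !allrel_consr /=.
  move=> /and4P [/andP [s1B ->] -> Bs2 ->]; rewrite !andbT.
  apply/andP; split; first by apply: sub_all s1B => C; apply: grow.
  apply: sub_all Bs2 => C.
  by rewrite /overfull addrC [_ + load w C]addrC; apply: grow.
Qed.

Lemma foldl_insertion_valid (ins : I -> seq (seq I) -> seq (seq I)) :
    (forall x bins, insertion_spec x bins (ins x bins)) ->
  forall t bins s, (forall i, i \in t -> 0 <= w i <= b) ->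
  valid_packing bins s ->
  valid_packing (foldl (fun bins x => ins x bins) bins t) (s ++ t).
Proof.
move=> ins_spec; elim=> [|x t IH] bins s w_t valid_s /=; first by rewrite cats0.
rewrite -cat_rcons; apply: IH => [i t_i|]; first by apply: w_t; rewrite inE t_i orbT.
by apply: insertion_valid valid_s; [apply: ins_spec | apply/w_t/mem_head].
Qed.

Lemma pack_decreasing_valid best s :
  (forall i, i \in s -> 0 <= w i <= b) -> valid_packing (pack_decreasing w b best s) s.
Proof.
move=> w_s; have sort_s : perm_eq (decreasing_order w s) s by rewrite perm_sort.
have [perm_t fit_t over_t] :
    valid_packing (pack_decreasing w b best s) ([::] ++ decreasing_order w s).
  apply: foldl_insertion_valid; last by split.
    by move=> x bins; case: best; [apply: bf_insert_spec | apply: ff_insert_spec].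
  by move=> i; rewrite (perm_mem sort_s); apply: w_s.
by split=> //; apply: perm_trans perm_t sort_s.
Qed.

Lemma all_overfull_bound B bins : all (overfull B) bins ->
  (size bins)%:R * b <= (size bins)%:R * load w B + \sum_(C <- bins) load w C.
Proof.
elim: bins => [|C bins IH] /=; first by rewrite big_nil !mul0r addr0.
rewrite big_cons -addn1 natrD /overfull => /andP [BC /IH]; nra.
Qed.

Lemma pairwise_overfull_bound bins : pairwise overfull bins ->
  (size bins)%:R * ((size bins)%:R - 1) * b <=
  2 * ((size bins)%:R - 1) * \sum_(B <- bins) load w B.
Proof.
elim: bins => [|B bins IH] /=; first by rewrite big_nil !mul0r mulr0.
rewrite big_cons -addn1 natrD addrK.
by move=> /andP [/all_overfull_bound head_bound /IH]; nra.
Qed.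

Lemma pairwise_overfull_size bins : 0 < b -> 2 * b < load w (flatten bins) ->
  pairwise overfull bins -> (size bins)%:R * b <= 2 * load w (flatten bins).
Proof.
rewrite load_flatten => b_gt0 total_gt /pairwise_overfull_bound.
have [two_le|] := leqP 2 (size bins).
  have : 2 <= (size bins)%:R :> R by rewrite (ler_nat R 2).
  nra.
by rewrite ltnS -(ler_nat R) => ? _; nra.
Qed.
End Packing.

Lemma sumr_const_seq (R : nmodType) (T : Type) (s : seq T) (c : R) :
  \sum_(i <- s) c = c *+ size s.
Proof.
by rewrite big_const_seq count_predT; elim: (size s) => //= n ->; rewrite mulrS.
Qed.

Section BinPairs.
Variables (R : realFieldType) (I : eqType) (w : I -> R).
Variables (X Y : seq I) (PX PY : seq (seq I)).

Let pairs := [seq BX ++ BY | BX <- PX, BY <- PY].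

Lemma bin_pairs_X2Y b : flatten PX =i X -> flatten PY =i Y ->
  all (fun B => load w B <= b) PX -> all (fun B => load w B <= b) PY ->
  is_X2Y_schema w (2 * b) X Y pairs.
Proof.
move=> PX_X PY_Y /allP fitX /allP fitY.
split; [| split].
- move=> _ /allpairsP [[BX BY] [/= BX_PX BY_PY ->]] z.
  rewrite !mem_cat -PX_X -PY_Y => /orP [z_BX|z_BY].
    by apply/orP; left; apply/flattenP; exists BX.
  by apply/orP; right; apply/flattenP; exists BY.
- move=> _ /allpairsP [[BX BY] [/= BX_PX BY_PY ->]].
  by rewrite load_cat; have := fitX _ BX_PX; have := fitY _ BY_PY; lra.
move=> x y; rewrite -PX_X -PY_Y => /flattenP [BX BX_PX x_BX] /flattenP [BY BY_PY y_BY].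
exists (BX ++ BY); first by apply/allpairsP; exists (BX, BY).
by rewrite !mem_cat x_BX y_BY orbT.
Qed.

Lemma comm_cost_bin_pairs :
  comm_cost w pairs = load w (flatten PX) *+ size PY + load w (flatten PY) *+ size PX.
Proof.
rewrite /comm_cost big_allpairs_dep /= !load_flatten.
under eq_bigr do under eq_bigr do rewrite load_cat.
under eq_bigr do rewrite big_split /= sumr_const_seq.
by rewrite big_split /= sumrMnl sumr_const_seq.
Qed.
End BinPairs.

Theorem theorem15 (R : realFieldType) (I : eqType) (w : I -> R) (b : R)
    (X Y : seq I) (bestX bestY : bool) :
  0 < b ->
  uniq X -> uniq Y -> [seq x <- X | x \in Y] = [::] ->
  (forall i, i \in X ++ Y -> 0 < w i /\ w i <= b) ->
  load w X > 2 * b -> load w Y > 2 * b ->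
  let q := 2 * b in
  let reducers := bin_pair_schema w b bestX bestY X Y in
  is_X2Y_schema w q X Y reducers /\
  (num_reducers reducers)%:R <= 4 * load w X * load w Y / b ^+ 2 /\
  comm_cost w reducers <= 4 * load w X * load w Y / b.
Proof.
move=> b_gt0 _ _ _ w_XY loadX_gt loadY_gt q reducers.
have w_X i : i \in X -> 0 <= w i <= b.
  by move=> Xi; case: (w_XY i); rewrite ?mem_cat ?Xi // => /ltW -> ->.
have w_Y i : i \in Y -> 0 <= w i <= b.
  by move=> Yi; case: (w_XY i); rewrite ?mem_cat ?Yi ?orbT // => /ltW -> ->.
have [permX fitX overX] := pack_decreasing_valid bestX w_X.
have [permY fitY overY] := pack_decreasing_valid bestY w_Y.
set PX := pack_decreasing w b bestX X in permX fitX overX *.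
set PY := pack_decreasing w b bestY Y in permY fitY overY *.
have loadPX : load w (flatten PX) = load w X by apply: perm_big.
have loadPY : load w (flatten PY) = load w Y by apply: perm_big.
have sizeX : (size PX)%:R * b <= 2 * load w X.
  by rewrite -loadPX pairwise_overfull_size ?loadPX.
have sizeY : (size PY)%:R * b <= 2 * load w Y.
  by rewrite -loadPY pairwise_overfull_size ?loadPY.
split; first exact: bin_pairs_X2Y (perm_mem permX) (perm_mem permY) fitX fitY.
split.
  rewrite /num_reducers size_allpairs natrM ler_pdivlMr ?exprn_gt0 //.
  have b_ge0 := ltW b_gt0.
  have := ler_pM (mulr_ge0 (ler0n _ _) b_ge0) (mulr_ge0 (ler0n _ _) b_ge0) sizeX sizeY.
  by rewrite expr2; nra.
rewrite comm_cost_bin_pairs loadPX loadPY.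
rewrite -[_ *+ size PY]mulr_natr -[_ *+ size PX]mulr_natr.
by rewrite ler_pdivlMr //; nra.
Qed.
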